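(* The set $\mathfrak{I}_{W} = \{ c_d^2, c_{(d-1)d}^2,\dots, c_{12}^2\}$ separates orbits for the action of $W_d(\mathbb{C})$ on $L$ and is a generating set for the field $\mathbb{C}(L)^{W_d(\mathbb{C})}$.
   Context: Let $d\ge 2$. Let $L\subset \mathbb{C}^d\oplus \mathfrak{so}(d,\mathbb{C})$ (where $\mathfrak{so}(d,\mathbb{C})$ is the space of complex skew-symmetric $d\times d$ matrices) be the linear subspace of pairs $(v,M)$ with $v=(0,\dots,0,c_d)^\top$ and $M$ the skew-symmetric tridiagonal matrix whose only possibly nonzero entries are $M_{i,i+1}=c_{i(i+1)}=-M_{i+1,i}$ for $1\le i\le d-1$. Let $W_d(\mathbb{C})$ be the group of diagonal $d\times d$ matrices with diagonal entries $w_i\in\{-1,1\}$; it acts on $L$ by $D\cdot(v,M)=(Dv,DMD^\top)$, i.e. $c_d\mapsto w_dc_d$ and $c_{i(i+1)}\mapsto w_iw_{i+1}c_{i(i+1)}$. The functions $c_d^2, c_{i(i+1)}^2$ are $W_d(\mathbb{C})$-invariant functions on $L$. $\mathbb{C}(L)^{W_d(\mathbb{C})}$ denotes the field of $W_d(\mathbb{C})$-invariant rational functions on $L$. A set of rational invariants separates orbits (is separating) if there is a non-empty Zariski-open subset of $L$ on which two points lie in the same orbit if and only if all functions in the set agree on them; here one can take the open subset where $c_d\neq0$ and all $c_{i(i+1)}\neq0$. *)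

From HB Require Import structures.
From mathcomp Require Import all_boot all_order all_algebra.
From mathcomp Require Import reals.
From mathcomp Require Import complex.
From mathcomp Require Import mpoly.
Set Implicit Arguments. Unset Strict Implicit. Unset Printing Implicit Defensive.
Import Order.TTheory GRing.Theory Num.Theory.
Local Open Scope ring_scope.

Definition CC (R : realType) := complex R.

Section Defs.
Variables (R : realType) (d : nat).
Local Notation C := (CC R).

(* Coordinates of L: a point of L is given by c : 'I_d -> C, where
   c i (i.+1 < d) is the coordinate c_{(i+1)(i+2)} and c (d-1) is c_d. *)
Definition L_vec (c : 'I_d -> C) : 'cV[C]_d :=
  \col_i (if val i == d.-1 then c i else 0).
Definition L_mat (c : 'I_d -> C) : 'M[C]_d :=
  \matrix_(i, j) (if val j == (val i).+1 then c i
                  else if val i == (val j).+1 then - c j else 0).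
(* the embedding of L into C^d (+) so(d,C) *)
Definition L_pt (c : 'I_d -> C) : 'cV[C]_d * 'M[C]_d := (L_vec c, L_mat c).

(* W_d(C): diagonal matrices with entries w_i = (-1)^(s i), s : 'I_d -> bool *)
Definition W_sign (s : {ffun 'I_d -> bool}) (i : 'I_d) : C := (-1) ^+ s i.
Definition W_mat (s : {ffun 'I_d -> bool}) : 'M[C]_d :=
  diag_mx (\row_i W_sign s i).
Definition W_act (s : {ffun 'I_d -> bool}) (x : 'cV[C]_d * 'M[C]_d)
  : 'cV[C]_d * 'M[C]_d :=
  (W_mat s *m x.1, W_mat s *m x.2 *m (W_mat s)^T).

(* induced action on coordinates: c_d |-> w_d c_d,
   c_{i(i+1)} |-> w_i w_{i+1} c_{i(i+1)} *)
Definition coord_sign (s : {ffun 'I_d -> bool}) (i : 'I_d) : C :=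
  if ((val i).+1 < d)%N then W_sign s i * W_sign s (insubd i (val i).+1)
  else W_sign s i.

(* action of W on the coordinate ring C[L] = {mpoly C[d]}: (w.p)(x) = p(w x) *)
Definition W_poly (s : {ffun 'I_d -> bool}) (p : {mpoly C[d]}) : {mpoly C[d]} :=
  p \mPo [tuple (coord_sign s i) *: 'X_i | i < d].

(* a rational function on L is represented by a pair (p, q), q != 0, meaning
   p / q in C(L) = Frac C[L]; p/q = p'/q' iff p q' = p' q. *)
Definition W_invariant_rat (p q : {mpoly C[d]}) : Prop :=
  forall s, W_poly s p * q = p * W_poly s q.

(* the subfield C(c_d^2, c_{(d-1)d}^2, ..., c_{12}^2) of C(L):
   p / q = P(c^2) / Q(c^2) with Q(c^2) != 0 *)
Definition squares : d.-tuple {mpoly C[d]} := [tuple 'X_i ^+ 2 | i < d].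
Definition in_field_of_squares (p q : {mpoly C[d]}) : Prop :=
  exists P Q : {mpoly C[d]},
    Q \mPo squares != 0 /\ p * (Q \mPo squares) = q * (P \mPo squares).

End Defs.

From HB Require Import structures.
From mathcomp Require Import all_boot all_order all_algebra.
From mathcomp Require Import reals complex mpoly.
From mathcomp Require Import zify.
Import Order.TTheory GRing.Theory Num.Theory.
Local Open Scope ring_scope.
Set Implicit Arguments. Unset Strict Implicit. Unset Printing Implicit Defensive.

(* The group W acts on the coordinates of L by signs, and the induced map
   w |-> (w_1 w_2, ..., w_{d-1} w_d, w_d) onto {-1,1}^d is surjective: every
   sign pattern on the coordinates is realised.  Hence the orbits are exactly
   the fibres of c |-> (c_i^2)_i, and a polynomial is invariant iff all its
   monomials have even exponents, i.e. iff it is a polynomial in the squares.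
   For an invariant fraction p/q, multiply numerator and denominator by the
   conjugates w.q, w <> 1: the new denominator, the norm of q, is invariant,
   hence so is the new numerator. *)

Lemma comp_mpolyA (R : comNzRingType) n k l (p : {mpoly R[n]})
    (t1 : n.-tuple {mpoly R[k]}) (t2 : k.-tuple {mpoly R[l]}) :
  (p \mPo t1) \mPo t2 = p \mPo [tuple tnth t1 i \mPo t2 | i < n].
Proof.
rewrite [p \mPo t1]comp_mpolyE [RHS]comp_mpolyE raddf_sum /=.
apply: eq_bigr => m _; rewrite comp_mpolyZ rmorph_prod /=; congr (_ *: _).
by apply: eq_bigr => i _; rewrite rmorphXn /= tnth_map tnth_ord_tuple.
Qed.

Lemma cross_mul_trans (K : idomainType) (a b c d e f : K) :
  d != 0 -> a * d = b * c -> c * f = d * e -> a * f = b * e.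
Proof.
move=> d_neq0 ad_bc cf_de; apply: (mulfI d_neq0).
by rewrite mulrA [d * a]mulrC ad_bc -mulrA cf_de mulrCA.
Qed.

Section ScaleVariables.
Variables (R : comNzRingType) (n : nat).
Implicit Types (e : 'I_n -> R) (p : {mpoly R[n]}).

Definition mscale e p : {mpoly R[n]} := p \mPo [tuple e i *: 'X_i | i < n].

Lemma mcoeff_mscale e p m : (mscale e p)@_m = p@_m * \prod_i e i ^+ m i.
Proof.
have scaled_monomial (m' : 'X_{1..n}) :
    \prod_(i < n) tnth [tuple e i *: 'X_i | i < n] i ^+ m' i
    = (\prod_i e i ^+ m' i) *: 'X_[m'].
  rewrite mpolyXE_id -scaler_prod; apply: eq_bigr => i _.
  by rewrite tnth_map tnth_ord_tuple exprZn.
set w := maxn (msize p) (mdeg m).+1.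
rewrite /mscale (@comp_mpolywE _ _ _ _ _ w) ?leq_maxl //.
pose E (m0 : 'X_{1..n}) := p@_m0 * \prod_i e i ^+ m0 i.
rewrite (eq_bigr (fun m0 : 'X_{1..n < w} => E m0 *: 'X_[m0])).
  by apply: (mcoeff_mpoly E); rewrite leq_maxr.
by move=> m0 _; rewrite scaled_monomial scalerA.
Qed.

Lemma eq_mscale e e' : e =1 e' -> mscale e =1 mscale e'.
Proof.
move=> ee' p; apply/mpolyP => m; rewrite !mcoeff_mscale.
by under eq_bigr do rewrite ee'.
Qed.

Lemma mscale_id e p : (forall i, e i = 1) -> mscale e p = p.
Proof.
move=> e1; apply/mpolyP => m; rewrite mcoeff_mscale big1 ?mulr1 // => i _.
by rewrite e1 expr1n.
Qed.

Lemma mscale_comp e e' p :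
  mscale e (mscale e' p) = mscale (fun i => e' i * e i) p.
Proof.
apply/mpolyP => m; rewrite !mcoeff_mscale -mulrA -big_split /=.
by under [in RHS]eq_bigr do rewrite exprMn.
Qed.

Lemma mscaleM e : {morph mscale e : p q / p * q}.
Proof. by move=> p q; rewrite /mscale rmorphM. Qed.

Lemma mscale_prod I (r : seq I) (P : pred I) (F : I -> {mpoly R[n]}) e :
  mscale e (\prod_(j <- r | P j) F j) = \prod_(j <- r | P j) mscale e (F j).
Proof. by rewrite /mscale rmorph_prod. Qed.

Lemma mscale_comp_squares e (P : {mpoly R[n]}) :
  (forall i, e i ^+ 2 = 1) ->
  mscale e (P \mPo [tuple 'X_i ^+ 2 | i < n])
  = P \mPo [tuple 'X_i ^+ 2 | i < n].
Proof.
move=> e_sqr; rewrite /mscale comp_mpolyA; congr (P \mPo _).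
apply: eq_mktuple => i.
rewrite tnth_map tnth_ord_tuple rmorphXn /= comp_mpolyXU.
by rewrite -tnth_nth tnth_map tnth_ord_tuple exprZn e_sqr scale1r.
Qed.

End ScaleVariables.

Section EvenPolynomials.
Variables (R : idomainType) (n : nat).
Hypothesis two_neq0 : 2%:R != 0 :> R.

Definition sign_at (i j : 'I_n) : R := (-1) ^+ (j == i).

Lemma sign_invariant_comp_squares (f : {mpoly R[n]}) :
  (forall i, mscale (sign_at i) f = f) ->
  exists P, f = P \mPo [tuple 'X_i ^+ 2 | i < n].
Proof.
move=> f_inv.
have even_exps m i : m \in msupp f -> ~~ odd (m i).
  rewrite mcoeff_msupp; apply: contraNN => odd_mi.
  have := congr1 (mcoeff m) (f_inv i); rewrite mcoeff_mscale (bigD1 i) //=.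
  rewrite big1 => [|j /negbTE ji]; last by rewrite /sign_at ji expr1n.
  rewrite /sign_at eqxx expr1 -signr_odd odd_mi expr1 mulr1 mulrN1 => /eqP.
  rewrite eq_sym -subr_eq0 opprK -mulr2n -mulr_natr mulf_eq0.
  by rewrite (negbTE two_neq0) orbF.
exists (\sum_(m <- msupp f) f@_m *: 'X_[[multinom (m i)./2 | i < n]]).
rewrite raddf_sum /= {1}[f]mpolyE; apply: eq_big_seq => m m_supp.
rewrite comp_mpolyZ comp_mpolyX mpolyXE_id; congr (_ *: _).
apply: eq_bigr => i _; rewrite tnth_map tnth_ord_tuple mnmE -exprM mul2n.
by rewrite -{1}(odd_double_half (m i)) (negbTE (even_exps m i m_supp)).
Qed.

End EvenPolynomials.

Section SignAction.
Variables (R : realType) (d : nat).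
Local Notation C := (CC R).
Local Notation signs := {ffun 'I_d -> bool}.
Local Notation W_sign := (@W_sign R d).
Local Notation coord_sign := (@coord_sign R d).
Local Notation W_poly := (@W_poly R d).
Implicit Types (s t : signs) (c : 'I_d -> C) (p q : {mpoly C[d]}).

Lemma ordS_or_last (i : 'I_d) :
  {j : 'I_d | val j = (val i).+1} + {val i = d.-1}.
Proof.
case: (ltnP i.+1 d) => [lt_Si_d | le_d_Si].
  by left; exists (Ordinal lt_Si_d).
by right; have := ltn_ord i; rewrite /=; lia.
Qed.

Lemma coord_sign_succ s (i j : 'I_d) :
  val j = (val i).+1 -> coord_sign s i = W_sign s i * W_sign s j.
Proof.
move=> ji; rewrite /coord_sign; case: ifP => [Si_lt_d | ]; last first.
  by have := ltn_ord j; rewrite /= in ji *; lia.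
by congr (_ * W_sign s _); apply: val_inj; rewrite val_insubd Si_lt_d.
Qed.

Lemma coord_sign_last s (i : 'I_d) :
  val i = d.-1 -> coord_sign s i = W_sign s i.
Proof. by move=> i_last; rewrite /coord_sign ifF //; apply/negbTE; lia. Qed.

Lemma coord_sign_sqr s i : coord_sign s i ^+ 2 = 1.
Proof.
by rewrite /coord_sign /W_sign; case: ifP; rewrite ?exprMn !sqrr_sign ?mulr1.
Qed.

Lemma coord_sign_surj (b : 'I_d -> bool) :
  exists s, forall i, coord_sign s i = (-1) ^+ b i.
Proof.
pose tail_sum (j : 'I_d) := (\sum_(k < d | (j <= k)%N) b k)%N.
exists [ffun j => odd (tail_sum j)] => i.
have W_signE j : W_sign [ffun j => odd (tail_sum j)] j = (-1) ^+ tail_sum j.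
  by rewrite /W_sign ffunE signr_odd.
have tail_sumE : tail_sum i = (b i + \sum_(k < d | (i < k)%N) b k)%N.
  rewrite /tail_sum /= (bigD1 i) //=; congr (_ + _)%N; apply: eq_bigl => k.
  by rewrite ltn_neqAle andbC eq_sym.
case: (ordS_or_last i) => [[j ji] | i_last].
  rewrite (coord_sign_succ _ ji) !W_signE tail_sumE exprD -mulrA.
  rewrite (eq_bigl (fun k : 'I_d => j <= k)%N) -?expr2 ?sqrr_sign ?mulr1 // => k.
  by rewrite ji.
rewrite coord_sign_last // W_signE tail_sumE big_pred0 ?addn0 // => k.
by apply/negbTE; have := ltn_ord k; rewrite /= in i_last *; lia.
Qed.

Definition sxor s t : signs := [ffun i => s i (+) t i].

Lemma sxor_inj t : injective (sxor^~ t).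
Proof.
move=> s s' /ffunP eq_st; apply/ffunP => i.
by have := eq_st i; rewrite !ffunE => /(congr1 (addb^~ (t i))); rewrite !addbK.
Qed.

Lemma coord_sign_sxor s t i :
  coord_sign (sxor s t) i = coord_sign s i * coord_sign t i.
Proof.
rewrite /coord_sign /W_sign !ffunE !signr_addb.
by case: ifP => _ //; rewrite mulrACA.
Qed.

Lemma W_polyE s p : W_poly s p = mscale (coord_sign s) p.
Proof. by []. Qed.

Lemma W_poly_sxor s t p : W_poly t (W_poly s p) = W_poly (sxor s t) p.
Proof.
rewrite !W_polyE mscale_comp; apply: eq_mscale => i.
by rewrite coord_sign_sxor.
Qed.

Lemma W_polyK s : involutive (W_poly s).
Proof.
move=> p; rewrite !W_polyE mscale_comp mscale_id // => i.
by rewrite -expr2 coord_sign_sqr.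
Qed.

Lemma W_poly_eq0 s p : (W_poly s p == 0) = (p == 0).
Proof.
have W_poly0 : W_poly s 0 = 0 by exact: comp_mpoly0.
apply/eqP/eqP => [|->] //.
by move/(congr1 (W_poly s)); rewrite W_polyK W_poly0.
Qed.

Lemma W_polyM s : {morph W_poly s : p q / p * q}.
Proof. exact: mscaleM. Qed.

Lemma W_poly_id p : W_poly [ffun => false] p = p.
Proof.
rewrite W_polyE mscale_id // => i.
by rewrite /coord_sign /W_sign !ffunE expr0 mulr1; case: ifP.
Qed.

Lemma W_poly_squares s (P : {mpoly C[d]}) :
  W_poly s (P \mPo squares R d) = P \mPo squares R d.
Proof. exact/mscale_comp_squares/coord_sign_sqr. Qed.

Lemma W_fixed_squares f :
  (forall s, W_poly s f = f) -> exists P, f = P \mPo squares R d.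
Proof.
move=> f_fixed; apply: sign_invariant_comp_squares => [|i].
  by rewrite pnatr_eq0.
have [s sE] := coord_sign_surj (fun j => j == i).
by rewrite -[RHS](f_fixed s); apply: eq_mscale => j; rewrite sE.
Qed.

Definition W_norm q := \prod_(s : signs) W_poly s q.

Lemma W_norm_fixed t q : W_poly t (W_norm q) = W_norm q.
Proof.
rewrite [LHS]mscale_prod.
under eq_bigr do rewrite -[mscale _ _]/(W_poly t _) W_poly_sxor.
exact: esym (@reindex_inj _ _ _ _ (sxor^~ t) xpredT (W_poly^~ q) (@sxor_inj t)).
Qed.

Lemma W_norm_neq0 q : q != 0 -> W_norm q != 0.
Proof.
move=> q_neq0; rewrite /W_norm prodf_seq_neq0.
by apply/allP => s _; rewrite W_poly_eq0.
Qed.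

Lemma W_normE q :
  W_norm q = q * \prod_(s : signs | s != [ffun => false]) W_poly s q.
Proof. by rewrite /W_norm (bigD1 [ffun => false]) //= W_poly_id. Qed.

Lemma W_invariant_rat_fixed p q (A B : {mpoly C[d]}) :
  (forall s, W_poly s A = A) -> (forall s, W_poly s B = B) ->
  A != 0 -> p * A = q * B -> W_invariant_rat p q.
Proof.
move=> A_fixed B_fixed A_neq0 pA_qB s; rewrite [RHS]mulrC.
have := congr1 (W_poly s) pA_qB; rewrite !W_polyM A_fixed B_fixed => WpA_WqB.
by apply: (cross_mul_trans A_neq0 WpA_WqB); rewrite mulrC -pA_qB mulrC.
Qed.

Lemma W_fixed_numerator p q (N M : {mpoly C[d]}) :
  q != 0 -> N != 0 -> W_invariant_rat p q -> (forall s, W_poly s N = N) ->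
  p * N = q * M -> forall s, W_poly s M = M.
Proof.
move=> q_neq0 N_neq0 pq_inv N_fixed pN_qM s; apply: (mulfI N_neq0).
have := congr1 (W_poly s) pN_qM; rewrite !W_polyM N_fixed => WpN_WqWM.
have Wq_neq0 : W_poly s q != 0 by rewrite W_poly_eq0.
have Mq_Np : M * q = N * p by rewrite mulrC -pN_qM mulrC.
have pWq_qWp : p * W_poly s q = q * W_poly s p :=
  etrans (esym (pq_inv s)) (mulrC _ _).
have MWq_NWp := cross_mul_trans q_neq0 Mq_Np pWq_qWp.
by rewrite [RHS]mulrC -(cross_mul_trans Wq_neq0 MWq_NWp WpN_WqWM).
Qed.

Lemma W_invariant_ratP p q :
  q != 0 -> W_invariant_rat p q <-> in_field_of_squares p q.
Proof.
move=> q_neq0; split => [pq_inv | [P [Q [Q_neq0 pQ_qP]]]]; last first.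
  exact: W_invariant_rat_fixed (W_poly_squares^~ Q) (W_poly_squares^~ P)
    Q_neq0 pQ_qP.
set M := p * \prod_(s : signs | s != [ffun => false]) W_poly s q.
have pN_qM : p * W_norm q = q * M by rewrite W_normE mulrCA.
have [Q NQ] := W_fixed_squares (W_norm_fixed^~ q).
have M_fixed := W_fixed_numerator q_neq0 (W_norm_neq0 q_neq0) pq_inv
  (W_norm_fixed^~ q) pN_qM.
have [P MP] := W_fixed_squares M_fixed.
by exists P, Q; rewrite -NQ -MP W_norm_neq0.
Qed.

Lemma W_act_L_pt s c :
  W_act s (L_pt c) = L_pt (fun i => coord_sign s i * c i).
Proof.
rewrite /W_act /L_pt /W_mat /=; congr pair; apply/matrixP => i j.
  rewrite mul_diag_mx !mxE; case: eqP => [i_last | _]; last by rewrite mulr0.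
  by rewrite coord_sign_last.
rewrite tr_diag_mx mul_mx_diag mul_diag_mx !mxE.
case: eqP => [ji | _]; first by rewrite (coord_sign_succ s ji) mulrAC.
case: eqP => [ij | _]; last by rewrite mulr0 mul0r.
by rewrite (coord_sign_succ s ij) mulrN mulNr mulrAC [W_sign s j * _]mulrC.
Qed.

Lemma L_pt_eq c c' : L_pt c = L_pt c' <-> c =1 c'.
Proof.
split => [[vec_eq mat_eq] i | eq_cc']; last first.
  by congr pair; apply/matrixP => i j; rewrite !mxE !eq_cc'.
case: (ordS_or_last i) => [[j ji] | i_last].
  by have := congr1 (fun A : 'M[C]_d => A i j) mat_eq; rewrite !mxE ji eqxx.
by have := congr1 (fun v : 'cV[C]_d => v i 0) vec_eq; rewrite !mxE i_last eqxx.
Qed.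

Lemma W_orbit_sqr c c' :
  (exists s, L_pt c' = W_act s (L_pt c)) <-> (forall i, c' i ^+ 2 = c i ^+ 2).
Proof.
split => [[s] | sqr_eq].
  rewrite W_act_L_pt => /L_pt_eq c'E i.
  by rewrite c'E exprMn coord_sign_sqr mul1r.
have [s sE] := coord_sign_surj (fun i => c' i != c i).
exists s; rewrite W_act_L_pt; apply/L_pt_eq => i; rewrite sE.
have /eqP := sqr_eq i; rewrite eqf_sqr => /orP[]/eqP->.
  by rewrite eqxx mul1r.
by case: eqP => [-> | _]; rewrite ?mul1r ?mulN1r.
Qed.

End SignAction.

Theorem proposition3p10 (R : realType) (d : nat) (hd : (2 <= d)%N) :
  (* separation of orbits on the open set where all coordinates are nonzero *)
  (forall c c' : 'I_d -> CC R,
      (forall i, c i != 0) -> (forall i, c' i != 0) ->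
      ((exists s : {ffun 'I_d -> bool}, L_pt c' = W_act s (L_pt c)) <->
       (forall i, c' i ^+ 2 = c i ^+ 2))) /\
  (* the invariant field C(L)^W equals C(c_d^2, c_{(d-1)d}^2, ..., c_{12}^2) *)
  (forall p q : {mpoly (CC R)[d]}, q != 0 ->
      (W_invariant_rat p q <-> in_field_of_squares p q)).
Proof.
split => [c c' _ _ | p q q_neq0]; first exact: W_orbit_sqr.
exact: W_invariant_ratP.
Qed.
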